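(* Every tree $T$ with at least two vertices contains a vertex $r$ such that the components $B_1,\dots,B_m$ of $T-r$ can be partitioned into two classes $\mathcal{C}_1$ and $\mathcal{C}_2$ such that for both $j\in\{1,2\}$, $$\sum_{B_i\in\mathcal{C}_j}|V(B_i)\cap \mathrm{Even}_T(r)| + \sum_{B_i\notin\mathcal{C}_j}|V(B_i)\cap\mathrm{Odd}_T(r)| \le \left(\frac23-\frac{1}{3\Delta(T)}\right)|T|+\frac12.$$
   Context: For a vertex $v$ of a tree $T$, $\mathrm{Even}_T(v)$ is the set of vertices at even distance from $v$ in $T$, excluding $v$ itself, and $\mathrm{Odd}_T(v)$ is the set of vertices at odd distance from $v$. $|T|$ is the number of vertices and $\Delta(T)$ the maximum degree. *)

From HB Require Import structures.
From mathcomp Require Import all_boot all_order all_algebra.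
Set Implicit Arguments. Unset Strict Implicit. Unset Printing Implicit Defensive.
Import Order.TTheory GRing.Theory Num.Theory.

(* A simple graph on a finite vertex type V is a symmetric irreflexive
   relation e. *)
Section Graphs.
Variable V : finType.
Variable e : rel V.

Definition has_cycle : Prop :=
  exists c : seq V, [/\ 2 < size c, uniq c & cycle e c].

Definition is_tree : Prop :=
  [/\ symmetric e, irreflexive e, (forall x y, connect e x y) & ~ has_cycle].

Fixpoint ball (x : V) (n : nat) : {set V} :=
  if n is n'.+1 then ball x n' :|: [set y | [exists z in ball x n', e z y]]
  else [set x].

(* Graph distance: least n with y in ball x n (distances in a connected
   graph are < #|V|; unreachable vertices would get #|V|). *)
Definition dist (x y : V) : nat := find (fun n => y \in ball x n) (iota 0 #|V|).

Definition Even (v : V) : {set V} := [set u | (u != v) && ~~ odd (dist v u)].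
Definition Odd (v : V) : {set V} := [set u | odd (dist v u)].

Definition maxdeg : nat := \max_(v : V) #|[set u | e v u]|.

Definition del_rel (r : V) : rel V := [rel x y | [&& e x y, x != r & y != r]].

Definition comps (r : V) : {set {set V}} :=
  [set [set y | connect (del_rel r) x y] | x in [set~ r]].

Definition class_weight (r : V) (C : {set {set V}}) : nat :=
  \sum_(B in C) #|B :&: Even r| + \sum_(B in comps r :\: C) #|B :&: Odd r|.

End Graphs.

From HB Require Import structures.
From mathcomp Require Import all_boot all_order all_algebra.
From mathcomp Require Import zify ring lra.
Set Implicit Arguments. Unset Strict Implicit. Unset Printing Implicit Defensive.
Import Order.TTheory GRing.Theory Num.Theory.

(* Two-colour the tree by the parity of the depth, with b <= a vertices in the
   two colour classes; since every non-root vertex is joined to its parent,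
   n - 1 <= b Delta.  Give every vertex the sign +1 or -1 according to its
   colour and call the signed count of a component its excess.  For a root v,
   the two quantities of the statement are |Odd(v)| +- (excess of C1) and
   |Odd(v)| -+ (excess of C2), so it suffices to find v and components of T - v
   whose total excess lies in a window [low v, high v].  Among all pairs (v, Q)
   where Q is a family of components of T - v of total excess >= low v, take one
   covering the fewest vertices: every component in Q then has excess < low v,
   for otherwise moving the root into that component would give a smaller pair.
   A greedy choice of components of Q now reaches a total in [low v, 2 low v),
   and 2 low v <= high v follows from n - 1 <= b Delta. *)

Lemma path_suffix_last_visit (T : eqType) (e : rel T) w x p :
  path e x p -> w \in x :: p ->
  exists q, [/\ path e w q, last w q = last x p, w \notin q,
                {subset q <= p} & size q <= size p].
Proof.
elim: p x => [|y p IHp] x /=.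
  by move=> _; rewrite inE => /eqP ->; exists [::].
move=> /andP [exy p_path] w_in.
case w_p: (w \in y :: p).
  have [q [q_path q_last w_q sub_q size_q]] := IHp y p_path w_p.
  exists q; split => //; last exact: leqW.
  by move=> z /sub_q z_p; rewrite inE z_p orbT.
move: w_in; rewrite inE w_p orbF => /eqP w_x; subst w.
by exists (y :: p); split => //=; rewrite ?exy // w_p.
Qed.

Lemma card_setI_sum (T : finType) (A S : {set T}) :
  #|A :&: S| = \sum_(u in A) (u \in S).
Proof.
rewrite -sum1_card big_mkcond [RHS]big_mkcond /=; apply: eq_bigr => u _.
by rewrite inE; case: (u \in A); case: (u \in S).
Qed.

Local Open Scope ring_scope.

Lemma subset_sum_window (R : realDomainType) (T : finType) (f : T -> R) (lo : R)
    (S : {set T}) :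
  0 < lo -> (forall x, x \in S -> f x < lo) -> lo <= \sum_(x in S) f x ->
  exists2 C : {set T}, C \subset S & lo <= \sum_(x in C) f x < lo *+ 2.
Proof.
move=> lo_gt0; have [n ltSn] := ubnP #|S|; elim: n S ltSn => // n IHn S ltSn f_lt lo_le.
have [S0 | [x Sx]] := set_0Vmem S.
  by move: lo_le; rewrite S0 big_set0 leNgt lo_gt0.
have [lo_le' | sum_lt] := lerP lo (\sum_(y in S :\ x) f y).
  have ltSn' : (#|S :\ x| < n)%N by move: ltSn; rewrite (cardsD1 x S) Sx.
  have f_lt' y : y \in S :\ x -> f y < lo by move/setD1P => [_ /f_lt].
  have [C sub_C sum_C] := IHn _ ltSn' f_lt' lo_le'.
  by exists C => //; apply: subset_trans sub_C (subD1set S x).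
exists S => //; rewrite lo_le (big_setD1 x Sx) mulr2n /=.
by rewrite ltrD ?f_lt.
Qed.

Definition paper_bound (n D : nat) : rat :=
  (2%:R / 3%:R - 1 / (3%:R * D%:R)) * n%:R + 1 / 2%:R.

Lemma minority_le_paper_bound n a b D :
  (a + b = n)%N -> (b <= a)%N -> (n.-1 <= b * D)%N -> b%:R <= paper_bound n D.
Proof.
move=> card_ab le_ba le_nbD; rewrite /paper_bound.
have b_half : 2%:R * b%:R <= n%:R :> rat by rewrite -natrM ler_nat; lia.
have n_ge0 : 0 <= n%:R :> rat := ler0n _ _.
have [-> | D_gt0] := posnP D.
  by rewrite mulr0n mulr0 invr0 mulr0 subr0; lra.
have [D1 | D_ge2] := leqP D 1.
  have D_eq1 : D = 1%N by lia.
  rewrite D_eq1 muln1 in le_nbD.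
  have n_le2 : n%:R <= 2%:R :> rat by rewrite ler_nat; lia.
  by rewrite D_eq1 mulr1; lra.
set t : rat := 1 / (3%:R * D%:R).
have tD : t * (3%:R * D%:R) = 1.
  by rewrite /t mul1r mulVf // mulf_neq0 // pnatr_eq0 -lt0n.
have D2 : 2%:R <= D%:R :> rat by rewrite ler_nat.
have t_le : t *+ 6 <= 1 by nra.
nra.
Qed.

Lemma le_three_paper_bound n a b D :
  (a + b = n)%N -> (n.-1 <= b * D)%N -> (a + n)%:R <= 3%:R * paper_bound n D + 1.
Proof.
move=> card_ab le_nbD; rewrite /paper_bound.
have card_ab_rat : a%:R + b%:R = n%:R :> rat by rewrite -natrD card_ab.
have b_ge0 : 0 <= b%:R :> rat := ler0n _ _.
rewrite natrD.
have [-> | D_gt0] := posnP D.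
  by rewrite mulr0n mulr0 invr0 mulr0 subr0; lra.
set t : rat := 1 / (3%:R * D%:R).
have t_ge0 : 0 <= t by rewrite divr_ge0 ?mulr_ge0 ?ler0n.
have tD : t * (3%:R * D%:R) = 1.
  by rewrite /t mul1r mulVf // mulf_neq0 // pnatr_eq0 -lt0n.
have D_ge1 : 1 <= D%:R :> rat by rewrite ler1n.
have n_le : n%:R <= b%:R * D%:R + 1 :> rat by rewrite -natrM natr1 ler_nat; lia.
have t_le : t *+ 3 <= 1 by nra.
have : t *+ 3 * n%:R <= b%:R + 1 by nra.
lra.
Qed.

Local Close Scope ring_scope.

Section Tree.
Variables (V : finType) (e : rel V).
Hypothesis e_sym : symmetric e.
Hypothesis e_irr : irreflexive e.
Hypothesis e_conn : forall x y, connect e x y.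
Hypothesis e_acyclic : ~ has_cycle e.

Lemma ballP x n y :
  reflect (exists p, [/\ path e x p, last x p = y & size p <= n]) (y \in ball e x n).
Proof.
apply: (iffP idP).
  elim: n y => [|n IHn] y /=.
    by rewrite inE => /eqP ->; exists [::].
  rewrite inE => /orP [/IHn [p [p_path p_last p_size]]|].
    by exists p; split => //; apply: leqW.
  rewrite inE => /existsP [z /andP [/IHn [p [p_path p_last p_size]] ezy]].
  exists (rcons p y); split.
  - by rewrite rcons_path p_path p_last.
  - by rewrite last_rcons.
  - by rewrite size_rcons.
elim: n y => [|n IHn] y /= [p [p_path p_last p_size]].
  by move: p_size; rewrite leqn0 => /nilP p0; rewrite inE -p_last p0.
rewrite inE; case: (leqP (size p) n) => size_p.
  by rewrite IHn //; exists p.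
apply/orP; right; rewrite inE.
have {p_size size_p} : size p = n.+1 by apply/eqP; rewrite eqn_leq p_size size_p.
move: p_path p_last; case/lastP: p => [|p z] //.
rewrite rcons_path last_rcons size_rcons => /andP [p_path ez] z_y [size_p]; subst z.
apply/existsP; exists (last x p); rewrite ez andbT.
by apply: IHn; exists p; rewrite size_p.
Qed.

Lemma dist_leq_ball x y k : y \in ball e x k -> k < #|V| -> dist e x y <= k.
Proof.
move=> y_ball k_lt; rewrite /dist.
case: leqP => // lt_find.
by have := before_find 0 lt_find; rewrite nth_iota // add0n y_ball.
Qed.

Lemma ball_dist x y k : y \in ball e x k -> k < #|V| -> y \in ball e x (dist e x y).
Proof.
move=> y_ball k_lt.
have has_ball : has (fun n => y \in ball e x n) (iota 0 #|V|).
  by apply/hasP; exists k; rewrite ?mem_iota.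
have find_lt : find (fun n => y \in ball e x n) (iota 0 #|V|) < #|V|.
  by rewrite -[X in _ < X](size_iota 0) -has_find.
by have := nth_find 0 has_ball; rewrite nth_iota.
Qed.

Lemma dist_xx x : dist e x x = 0.
Proof.
apply/eqP; rewrite -leqn0; apply: dist_leq_ball; first by rewrite /= inE.
by apply/card_gt0P; exists x.
Qed.

Lemma exists_short_path x y :
  exists p, [/\ path e x p, last x p = y & size p < #|V|].
Proof.
have /connectP [p p_path ->] := e_conn x y.
have [q q_path q_uniq _] := shortenP p_path.
exists q; split => //.
by have := max_card (mem (x :: q)); move/card_uniqP: q_uniq => ->.
Qed.

Lemma dist_leq_size x p : path e x p -> dist e x (last x p) <= size p.
Proof.
move=> p_path; case: (ltnP (size p) #|V|) => size_p.
  by apply: dist_leq_ball => //; apply/ballP; exists p.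
have [q [q_path q_last size_q]] := exists_short_path x (last x p).
apply: leq_trans (ltnW (leq_trans size_q size_p)).
by apply: dist_leq_ball => //; apply/ballP; exists q.
Qed.

Lemma shortest_path x y :
  exists p, [/\ path e x p, last x p = y & size p = dist e x y].
Proof.
have [q [q_path q_last size_q]] := exists_short_path x y.
have y_ball : y \in ball e x (size q) by apply/ballP; exists q.
have /ballP [p [p_path p_last size_p]] := ball_dist y_ball size_q.
exists p; split => //; apply/eqP; rewrite eqn_leq size_p.
by rewrite -p_last dist_leq_size.
Qed.

Lemma dist_edge x y : e x y -> dist e x y = 1.
Proof.
move=> exy; apply/eqP; rewrite eqn_leq.
have -> : dist e x y <= 1 by have := @dist_leq_size x [:: y]; rewrite /= exy; apply.
have [[|z p] [_ /= p_last <-]] // := shortest_path x y.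
by rewrite p_last e_irr in exy.
Qed.

Lemma del_rel_sym w : symmetric (del_rel e w).
Proof. by move=> x y; rewrite /del_rel /= e_sym; case: (e y x); rewrite //= andbC. Qed.

Lemma del_rel_sub w : subrel (del_rel e w) e.
Proof. by move=> x y /andP []. Qed.

Lemma path_del_rel w x p : path e x p -> w \notin x :: p -> path (del_rel e w) x p.
Proof.
elim: p x => [|y p IHp] x //= /andP [exy p_path].
rewrite !inE !negb_or => /and3P [x_w y_w w_p].
rewrite /del_rel /= exy eq_sym x_w eq_sym y_w IHp //.
by rewrite inE negb_or y_w.
Qed.

Lemma path_del_rel_notin w x p : path (del_rel e w) x p -> w \notin p.
Proof.
elim: p x => [|y p IHp] x //= /andP [/and3P [_ _ y_w] p_path].
by rewrite inE negb_or eq_sym y_w (IHp y).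
Qed.

Lemma connect_del_rel_neq w x y : connect (del_rel e w) x y -> x != w -> y != w.
Proof.
move=> /connectP [p p_path ->] x_w.
have := mem_last x p; rewrite inE => /orP [/eqP -> //|last_p].
by apply: contraNneq (path_del_rel_notin p_path) => <-.
Qed.

Lemma disconnected_nbrs v c1 c2 :
  e v c1 -> e v c2 -> c1 != c2 -> ~~ connect (del_rel e v) c1 c2.
Proof.
move=> ec1 ec2 c12; apply/negP => /connectP [p p_path p_last].
case: (shortenP p_path) p_last => q q_path q_uniq _ q_last.
apply: e_acyclic; exists [:: v, c1 & q]; split.
- by case: q q_last {q_path q_uniq} => [/= c1_c2|] //; rewrite c1_c2 eqxx in c12.
- rewrite /= -/(uniq (c1 :: q)) q_uniq andbT inE negb_or.
  rewrite (path_del_rel_notin q_path) andbT.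
  by apply: contraTneq ec1 => ->; rewrite e_irr.
- rewrite /cycle /= rcons_path ec1 (sub_path (@del_rel_sub v) q_path) /=.
  by rewrite -q_last e_sym.
Qed.

Lemma dist_nbr_comp v c u : e v c -> connect (del_rel e v) c u ->
  dist e v u = (dist e c u).+1.
Proof.
move=> evc c_u; apply/eqP; rewrite eqn_leq; apply/andP; split.
  have [p [p_path p_last p_size]] := shortest_path c u.
  by have := @dist_leq_size v (c :: p); rewrite /= evc p_path p_last p_size; apply.
have [p [p_path p_last p_size]] := shortest_path v u.
have [q [q_path q_last v_q _ size_q]] := path_suffix_last_visit p_path (mem_head v p).
have c_v : c != v by apply: contraTneq evc => ->; rewrite e_irr.
have u_v : u != v := connect_del_rel_neq c_u c_v.
case: q q_path q_last v_q size_q => [_ /= v_u|c' q /=].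
  by rewrite v_u p_last eqxx in u_v.
move=> /andP [evc' q_path] q_last; rewrite inE negb_or => /andP [v_c' v_q] size_q.
have c'_u : connect (del_rel e v) c' u.
  apply/connectP; exists q; last by rewrite q_last p_last.
  by apply: path_del_rel => //; rewrite inE negb_or v_c'.
have c_c' : c = c'.
  apply/eqP/negPn/negP => /(disconnected_nbrs evc evc')/negP; apply.
  by apply: connect_trans c_u _; rewrite (sym_connect_sym (@del_rel_sym v)).
subst c'; rewrite -p_size.
by apply: (leq_ltn_trans _ size_q); rewrite -p_last -q_last dist_leq_size.
Qed.

Lemma connect_del_nbr v c u : e v c ->
  connect (del_rel e v) c u || connect (del_rel e c) v u.
Proof.
move=> evc; have /connectP [p p_path p_last] := e_conn v u.
have [q [q_path q_last v_q sub_q _]] := path_suffix_last_visit p_path (mem_head v p).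
have c_v : c != v by apply: contraTneq evc => ->; rewrite e_irr.
case c_q: (c \in q).
  have [q' [q'_path q'_last _ sub_q' _]] :=
    path_suffix_last_visit q_path (@mem_behead _ (v :: q) c c_q).
  apply/orP; left; apply/connectP; exists q'; last by rewrite q'_last q_last.
  apply: path_del_rel => //; rewrite inE negb_or eq_sym c_v /=.
  by apply: contra v_q => /sub_q'.
apply/orP; right; apply/connectP; exists q; last by rewrite q_last.
by apply: path_del_rel => //; rewrite inE negb_or c_q c_v.
Qed.

Lemma odd_dist_nbr v c u : e v c -> odd (dist e v u) = ~~ odd (dist e c u).
Proof.
move=> evc; case/orP: (connect_del_nbr u evc) => [c_u|v_u].
  by rewrite (dist_nbr_comp evc c_u).
by rewrite (dist_nbr_comp _ v_u) ?negbK // e_sym.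
Qed.

Lemma odd_dist_path u x p : path e x p ->
  odd (dist e (last x p) u) = odd (dist e x u) (+) odd (size p).
Proof.
elim: p x => [|y p IHp] x /=; first by rewrite addbF.
move=> /andP [exy p_path]; rewrite IHp // (odd_dist_nbr u exy).
by case: (odd (dist e y u)); case: (odd (size p)).
Qed.

Lemma odd_dist_rebase rho r u :
  odd (dist e r u) = odd (dist e rho r) (+) odd (dist e rho u).
Proof.
have /connectP [p p_path ->] := e_conn rho r.
have := odd_dist_path (last rho p) p_path; rewrite dist_xx (odd_dist_path u p_path).
by case: (odd (dist e rho (last rho p))); case: (odd (size p));
  case: (odd (dist e rho u)).
Qed.

Definition comp r x : {set V} := [set y | connect (del_rel e r) x y].

Lemma compsP r B : reflect (exists2 x, x != r & B = comp r x) (B \in comps e r).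
Proof.
apply: (iffP imsetP) => [[x x_r ->]|[x x_r ->]]; exists x => //.
  by move: x_r; rewrite in_setC1.
by rewrite in_setC1.
Qed.

Lemma mem_comp r x : x \in comp r x.
Proof. by rewrite inE connect0. Qed.

Lemma comp_eq r x y : y \in comp r x -> comp r y = comp r x.
Proof.
rewrite inE => x_y; apply/setP => z; rewrite !inE; apply/idP/idP => [|y_z].
  exact: connect_trans.
by apply: connect_trans y_z; rewrite (sym_connect_sym (@del_rel_sym r)).
Qed.

Lemma comps_eq r B y : B \in comps e r -> y \in B -> B = comp r y.
Proof. by move=> /compsP [x _ ->] /comp_eq ->. Qed.

Lemma comps_notin r B : B \in comps e r -> r \notin B.
Proof.
move=> /compsP [x x_r ->]; rewrite inE; apply/negP => x_r'.
by have := connect_del_rel_neq x_r' x_r; rewrite eqxx.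
Qed.

Lemma trivIset_comps r : trivIset (comps e r).
Proof.
apply/trivIsetP => A B A_comp B_comp A_B; rewrite -setI_eq0; apply/set0Pn.
case=> y /setIP [y_A y_B].
by rewrite (comps_eq A_comp y_A) (comps_eq B_comp y_B) eqxx in A_B.
Qed.

Lemma cover_comps r : cover (comps e r) = [set~ r].
Proof.
apply/setP => y; rewrite in_setC1; apply/bigcupP/idP => [[B B_comp y_B]|y_r].
  by apply: contraTneq y_B => ->; apply: comps_notin.
by exists (comp r y); [apply/compsP; exists y | apply: mem_comp].
Qed.

Lemma comps_nbr r B : B \in comps e r -> exists2 c, c \in B & e r c.
Proof.
move=> /compsP [x x_r ->].
have /connectP [p p_path p_last] := e_conn r x.
have [q [q_path q_last r_q _ _]] := path_suffix_last_visit p_path (mem_head r p).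
case: q q_path q_last r_q => [_ /= r_x|c q /= /andP [erc q_path] q_last].
  by rewrite p_last -r_x eqxx in x_r.
rewrite inE negb_or => /andP [r_c r_q]; exists c => //.
rewrite inE (sym_connect_sym (@del_rel_sym r)); apply/connectP.
exists q; last by rewrite q_last p_last.
by apply: path_del_rel => //; rewrite inE negb_or r_c.
Qed.

Lemma cover_comps_nbr v c : e v c ->
  cover [set B in comps e c | v \notin B] = comp v c :\ c.
Proof.
move=> evc; apply/setP => y; rewrite !inE; apply/bigcupP/idP.
  move=> [B]; rewrite inE => /andP [B_comp v_B] y_B.
  have c_B := comps_notin B_comp.
  rewrite (comps_eq B_comp y_B) in v_B c_B.
  have -> /= : y != c by apply: contraNneq c_B => ->; apply: mem_comp.
  case/orP: (connect_del_nbr y evc) => // c_y.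
  by move: v_B; rewrite inE (sym_connect_sym (@del_rel_sym c)) c_y.
move=> /andP [y_c v_y]; exists (comp c y); last exact: mem_comp.
rewrite inE; apply/andP; split; first by apply/compsP; exists y.
rewrite inE (sym_connect_sym (@del_rel_sym c)); apply/negP => c_v.
have := dist_nbr_comp evc v_y; rewrite (dist_nbr_comp _ c_v); first lia.
by rewrite e_sym.
Qed.

Definition parent rho u := odflt u [pick z | e z u && (dist e rho z < dist e rho u)].

Lemma parentP rho u : u != rho ->
  e (parent rho u) u && (dist e rho (parent rho u) < dist e rho u).
Proof.
move=> u_rho; rewrite /parent; case: pickP => [z z_ok //|no_parent].
have [p [p_path p_last p_size]] := shortest_path rho u.
move: p_path p_last p_size; case/lastP: p => [_ /= rho_u|p y].
  by rewrite rho_u eqxx in u_rho.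
rewrite rcons_path last_rcons size_rcons => /andP [p_path e_y] y_u p_size; subst y.
by have := no_parent (last rho p); rewrite e_y -p_size ltnS dist_leq_size.
Qed.

Lemma card_colour_class_maxdeg (col : V -> bool) (k : bool) :
  (forall u v, e u v -> col u != col v) ->
  #|V|.-1 <= #|[set u | col u == k]| * maxdeg e.
Proof.
move=> col_edge; case: (posnP #|V|) => [-> // | /card_gt0P [rho _]].
(* Charge each u != rho to the edge {u, parent u}, oriented from its end of colour k. *)
pose f u := if col u == k then (u, parent rho u) else (parent rho u, u).
pose P := [set pr : V * V | (col pr.1 == k) && e pr.1 pr.2].
have f_sub : f @: [set~ rho] \subset P.
  apply/subsetP => pr /imsetP [u]; rewrite in_setC1 => u_rho ->.
  have /andP [e_pu _] := parentP u_rho.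
  rewrite /f inE; case: ifP => [-> /=|col_u]; first by rewrite e_sym.
  rewrite /= e_pu andbT.
  move: (col_edge _ _ e_pu) col_u; clear f P.
  by case: (col u); case: (col (parent rho u)); case: k.
have f_inj : {in [set~ rho] &, injective f}.
  move=> u1 u2; rewrite !in_setC1 => /parentP/andP [_ lt1] /parentP/andP [_ lt2].
  rewrite /f; case: ifP => _; case: ifP => _ [] E1 E2 //.
    rewrite E2 in lt1; rewrite -E1 in lt2.
    by have := ltn_trans lt1 lt2; rewrite ltnn.
  rewrite E1 in lt1; rewrite -E2 in lt2.
  by have := ltn_trans lt1 lt2; rewrite ltnn.
have card_P : #|P| = \sum_(z | col z == k) #|[set u | e z u]|.
  rewrite -sum1_card (eq_bigl (fun pr : V * V => (col pr.1 == k) && e pr.1 pr.2));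
    last by move=> pr; rewrite inE.
  rewrite -(pair_big_dep (fun z => col z == k) (fun z u => e z u) (fun _ _ => 1)) /=.
  by apply: eq_bigr => z _; rewrite sum1_card cardsE.
apply: (@leq_trans #|P|).
  by rewrite -(cardsC1 rho) -(card_in_imset f_inj) subset_leq_card.
have -> : #|[set u | col u == k]| * maxdeg e = \sum_(z | col z == k) maxdeg e.
  by rewrite sum_nat_const cardsE.
rewrite card_P; apply: leq_sum => z _.
exact: (@leq_bigmax _ (fun v => #|[set u | e v u]|) z).
Qed.

Section Colouring.
Variable col : V -> bool.
Hypothesis odd_dist_col : forall r u, odd (dist e r u) = col r (+) col u.

Definition black : {set V} := [set u | col u].

Lemma col_nbr v c : e v c -> col v != col c.
Proof.
move=> evc; have := odd_dist_col v c; rewrite dist_edge //.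
by case: (col v); case: (col c).
Qed.

Lemma EvenE r : Even e r = [set u | (u != r) && (col u == col r)].
Proof. by apply/setP => u; rewrite !inE odd_dist_col; case: (col r); case: (col u). Qed.

Lemma OddE r : Odd e r = [set u | col u != col r].
Proof. by apply/setP => u; rewrite !inE odd_dist_col; case: (col r); case: (col u). Qed.

Lemma card_Odd r : #|Odd e r| = if col r then #|~: black| else #|black|.
Proof.
by rewrite OddE; case: (col r); apply: eq_card => u; rewrite !inE; case: (col u).
Qed.

Lemma sum_card_Odd_comps r :
  \sum_(B in comps e r) #|B :&: Odd e r| = #|Odd e r|.
Proof.
under eq_bigr => B _ do rewrite card_setI_sum.
rewrite -big_trivIset ?trivIset_comps // cover_comps -card_setI_sum.
suff /setIidPr -> : Odd e r \subset [set~ r] by [].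
apply/subsetP => u; rewrite OddE in_setC1 inE.
by apply: contraTneq => ->; rewrite eqxx.
Qed.

Local Open Scope ring_scope.

Definition sign u : rat := if col u then 1 else -1.
Definition excess (A : {set V}) : rat := \sum_(u in A) sign u.

Lemma excessE A : excess A = #|A :&: black|%:R - #|A :\: black|%:R.
Proof.
rewrite setDE !card_setI_sum !natr_sum -sumrB; apply: eq_bigr => u _.
by rewrite /sign !inE; case: (col u); rewrite /= ?subr0 ?sub0r.
Qed.

Lemma excess_cover (Q : {set {set V}}) :
  trivIset Q -> \sum_(B in Q) excess B = excess (cover Q).
Proof. by move=> triv_Q; rewrite /excess big_trivIset. Qed.

Lemma card_Even_comp r B : B \in comps e r ->
  #|B :&: Even e r|%:R = #|B :&: Odd e r|%:R + sign r * excess B.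
Proof.
move=> B_comp; rewrite !card_setI_sum !natr_sum /excess mulr_sumr -big_split.
apply: eq_bigr => u u_B.
have u_r : u != r by apply: contraTneq u_B => ->; apply: comps_notin.
rewrite EvenE OddE !inE u_r /sign.
by case: (col r); case: (col u); rewrite /= ?mulr1 ?mulrN1 ?opprK ?add0r ?addr0 ?addrN.
Qed.

Lemma class_weightE r (C : {set {set V}}) : C \subset comps e r ->
  (class_weight e r C)%:R = #|Odd e r|%:R + sign r * \sum_(B in C) excess B.
Proof.
move=> sub_C; rewrite /class_weight natrD !natr_sum.
rewrite (eq_bigr (fun B => #|B :&: Odd e r|%:R + sign r * excess B)); last first.
  by move=> B /(subsetP sub_C); apply: card_Even_comp.
rewrite big_split /= -mulr_sumr -(sum_card_Odd_comps r) natr_sum.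
by rewrite (big_setID C (A := comps e r)) /= (setIidPr sub_C); ring.
Qed.

Lemma sum_excess_comps r :
  \sum_(B in comps e r) excess B = #|black|%:R - #|~: black|%:R - sign r.
Proof.
rewrite excess_cover ?trivIset_comps // cover_comps.
have : excess setT = sign r + excess [set~ r].
  by rewrite /excess (big_setD1 r (in_setT r)) /= setTD.
by rewrite excessE setTI setTD => ->; ring.
Qed.

Section Window.
Variable bound : rat.

Definition low v : rat := #|black|%:R - bound - (col v)%:R.
Definition high v : rat := bound - #|~: black|%:R + (~~ col v)%:R.

Definition heavy v (Q : {set {set V}}) :=
  (Q \subset comps e v) && (low v <= \sum_(B in Q) excess B).

Lemma class_weight_window v (C : {set {set V}}) : C \subset comps e v ->
  low v <= \sum_(B in C) excess B <= high v ->
  (class_weight e v C)%:R <= bound /\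
  (class_weight e v (comps e v :\: C))%:R <= bound.
Proof.
move=> sub_C /andP [low_le le_high].
have sum_compl : \sum_(B in comps e v :\: C) excess B =
    \sum_(B in comps e v) excess B - \sum_(B in C) excess B.
  by rewrite [in RHS](big_setID C (A := comps e v)) /= (setIidPr sub_C) addrC addrK.
rewrite !class_weightE ?subsetDl // sum_compl sum_excess_comps card_Odd.
by move: low_le le_high; rewrite /low /high /sign; case: (col v) => /=; split; lra.
Qed.

Lemma low_nbr v c : e v c -> low c = low v - sign c.
Proof.
move/col_nbr; rewrite /low /sign.
by case: (col v); case: (col c) => //= _; ring.
Qed.

Lemma heavy_comps r : #|~: black|%:R <= bound -> heavy r (comps e r).
Proof.
move=> b_le; rewrite /heavy subxx sum_excess_comps /low /sign.
by case: (col r) => /=; lra.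
Qed.

Lemma heavy_descend v (Q : {set {set V}}) B :
  heavy v Q -> B \in Q -> low v <= excess B ->
  exists c Q', heavy c Q' /\ (#|cover Q'| < #|cover Q|)%N.
Proof.
move=> /andP [sub_Q _] B_Q low_le.
have B_comp : B \in comps e v := subsetP sub_Q B B_Q.
have [c c_B evc] := comps_nbr B_comp.
pose Q' := [set B' in comps e c | v \notin B'].
have sub_Q' : Q' \subset comps e c by apply/subsetP => B'; rewrite inE => /andP [].
have cover_Q' : cover Q' = B :\ c by rewrite (comps_eq B_comp c_B) cover_comps_nbr.
exists c, Q'; split.
  rewrite /heavy sub_Q' excess_cover ?(trivIsetS sub_Q' (trivIset_comps c)) //.
  have : excess B = sign c + excess (B :\ c) by rewrite /excess (big_setD1 c c_B).
  by rewrite cover_Q' (low_nbr evc); lra.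
have B_le : (#|B| <= #|cover Q|)%N by apply/subset_leq_card/bigcup_sup.
by move: B_le; rewrite cover_Q' (cardsD1 c B) c_B add1n.
Qed.

Lemma exists_heavy_light r : heavy r (comps e r) ->
  exists v Q, heavy v Q /\ forall B, B \in Q -> excess B < low v.
Proof.
move=> heavy_r.
have [[v Q] /= heavy_vQ min_vQ] :=
  @arg_minnP _ (r, comps e r) (fun p => heavy p.1 p.2) (fun p => #|cover p.2|) heavy_r.
exists v, Q; split => // B B_Q; rewrite ltNge; apply/negP => low_le.
have [c [Q' [heavy_cQ' lt_cover]]] := heavy_descend heavy_vQ B_Q low_le.
by have := min_vQ (c, Q') heavy_cQ'; rewrite /= leqNgt lt_cover.
Qed.

Lemma exists_window_class : (0 < #|V|)%N ->
  #|~: black|%:R <= bound -> (#|black| + #|V|)%:R <= 3%:R * bound + 1 ->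
  exists v (C : {set {set V}}),
    C \subset comps e v /\ low v <= \sum_(B in C) excess B <= high v.
Proof.
case/card_gt0P => r _ b_le three_bound.
have [v [Q [/andP [sub_Q low_le] light]]] := exists_heavy_light (heavy_comps r b_le).
have card_V : #|black|%:R + #|~: black|%:R = #|V|%:R :> rat by rewrite -natrD cardsC.
have twice_low : low v *+ 2 <= high v.
  move: three_bound; rewrite natrD -card_V mulr2n /low /high.
  by case: (col v) => /=; lra.
have [low_le0 | low_gt0] := lerP (low v) 0.
  exists v, set0; split; first exact: sub0set.
  by rewrite big_set0 low_le0 /=; move: b_le; rewrite /high; case: (col v) => /=; lra.
have [C sub_C /andP [low_leC C_lt]] := subset_sum_window low_gt0 light low_le.
exists v, C; split; first exact: subset_trans sub_C sub_Q.
by rewrite low_leC /=; apply/ltW/(lt_le_trans C_lt).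
Qed.

End Window.
End Colouring.

Lemma exists_majority_colouring (rho : V) :
  exists col : V -> bool, (forall r u, odd (dist e r u) = col r (+) col u) /\
    #|~: black col| <= #|black col|.
Proof.
pose depth_odd u := odd (dist e rho u).
have [le_ba | lt_ab] := leqP #|~: black depth_odd| #|black depth_odd|.
  by exists depth_odd; split => // r u; apply: odd_dist_rebase.
exists (fun u => ~~ depth_odd u); split.
  move=> r u; rewrite (odd_dist_rebase rho) /depth_odd.
  by case: (odd (dist e rho r)); case: (odd (dist e rho u)).
have -> : black (fun u => ~~ depth_odd u) = ~: black depth_odd.
  by apply/setP => u; rewrite !inE.
by rewrite setCK ltnW.
Qed.

Lemma exists_balanced_root : 0 < #|V| ->
  exists r (C1 : {set {set V}}), C1 \subset comps e r /\
    ((class_weight e r C1)%:R <= paper_bound #|V| (maxdeg e))%R /\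
    ((class_weight e r (comps e r :\: C1))%:R <= paper_bound #|V| (maxdeg e))%R.
Proof.
move=> V_gt0; have /card_gt0P [rho _] := V_gt0.
have [col [odd_dist_col le_ba]] := exists_majority_colouring rho.
have card_V : #|black col| + #|~: black col| = #|V| by rewrite cardsC.
have le_nbD := @card_colour_class_maxdeg col false (col_nbr odd_dist_col).
rewrite (_ : [set u | col u == false] = ~: black col) in le_nbD; last first.
  by apply/setP => u; rewrite !inE eqbF_neg.
have [v [C [sub_C window_C]]] := exists_window_class odd_dist_col V_gt0
  (minority_le_paper_bound card_V le_ba le_nbD) (le_three_paper_bound card_V le_nbD).
by exists v, C; split => //; apply: class_weight_window.
Qed.

End Tree.

Unset Implicit Arguments.
Local Open Scope ring_scope.

Theorem lemma7p3 (V : finType) (e : rel V) :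
  is_tree e -> (1 < #|V|)%N ->
  exists r : V, exists C1 : {set {set V}},
    C1 \subset comps e r /\
    let bound : rat :=
      (2%:R / 3%:R - 1 / (3%:R * (maxdeg e)%:R)) * #|V|%:R + 1 / 2%:R in
    ((class_weight e r C1)%:R <= bound) /\
    ((class_weight e r (comps e r :\: C1))%:R <= bound).
Proof.
case=> e_sym e_irr e_conn e_acyclic V_gt1.
exact: exists_balanced_root e_sym e_irr e_conn e_acyclic (ltnW V_gt1).
Qed.
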